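(* Let $n,m$ be integers with $6 \le n \le m \le 2n-1$. If $n+m \equiv 0 \pmod 3$ or $n+m \equiv 2 \pmod 3$, then \[\gamma^{\rm ID}(K_n\times K_m) = \left\lfloor \frac{2m+2n}{3}\right\rfloor.\]
   Context: For a graph $G$ and vertex $x$, $N[x]$ denotes the closed neighborhood of $x$. A set $C \subseteq V(G)$ is an identifying code (ID code) of $G$ if $C$ is a dominating set of $G$ and $N[x]\cap C \ne N[y]\cap C$ for every pair of distinct vertices $x,y$. $\gamma^{\rm ID}(G)$ is the minimum cardinality of an ID code of $G$. The direct product $G_1\times G_2$ has vertex set $V(G_1)\times V(G_2)$, with $(u_1,u_2)$ adjacent to $(v_1,v_2)$ iff $u_1v_1\in E(G_1)$ and $u_2v_2 \in E(G_2)$. $K_n$ is the complete graph on vertex set $[n]=\{1,\dots,n\}$; thus in $K_n\times K_m$ two vertices are adjacent iff they differ in both coordinates. *)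

From mathcomp Require Import all_boot.
Set Implicit Arguments. Unset Strict Implicit. Unset Printing Implicit Defensive.

Definition cnbhd (T : finType) (e : rel T) (x : T) : {set T} :=
  [set y | (y == x) || e x y].

Definition dominating (T : finType) (e : rel T) (C : {set T}) : bool :=
  [forall x, cnbhd e x :&: C != set0].

Definition id_code (T : finType) (e : rel T) (C : {set T}) : bool :=
  dominating e C &&
  [forall x, forall y, (x != y) ==> (cnbhd e x :&: C != cnbhd e y :&: C)].

Definition gammaID_is (T : finType) (e : rel T) (k : nat) : Prop :=
  (exists C : {set T}, id_code e C /\ #|C| = k) /\
  (forall C : {set T}, id_code e C -> k <= #|C|).

Definition Kn_rel (n : nat) : rel 'I_n := fun u v => u != v.

Definition dprod_rel (T1 T2 : finType) (e1 : rel T1) (e2 : rel T2)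
  : rel (T1 * T2) := fun u v => e1 u.1 v.1 && e2 u.2 v.2.

Definition KnxKm (n m : nat) : rel ('I_n * 'I_m) :=
  dprod_rel (@Kn_rel n) (@Kn_rel m).
Arguments KnxKm : clear implicits.

(* The vertices of K_n x K_m are the cells of an n x m grid, two cells being
   adjacent iff they differ in both coordinates; the row (column) degree of a
   set C of cells counts the codewords in that row (column).

   Two cells in distinct rows and columns have the same trace
   on C iff the square they span absorbs every codeword of its two rows and
   two columns.  Hence an ID code has at most one empty row, at most one
   codeword alone in both its row and its column, never an empty row, an
   empty column and such a codeword together, and, when some row is empty,
   every row with two codewords contains a codeword alone in neither line.
   Counting codewords row by row, and column by column through transposition
   (an isomorphism K_m x K_n ~ K_n x K_m), turns these facts into linear
   constraints that force 2(n + m) <= 3|C| + 2.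

   Writing n = a + 2b + e and m = 2a + b + e with e <= 1, we
   label rows and columns with a + b + e labels and keep the cells whose row
   and column labels agree.  A general criterion shows that such label codes
   are identifying, and this one has m + b = floor((2m + 2n)/3) codewords. *)

From mathcomp Require Import all_boot zify.
Set Implicit Arguments. Unset Strict Implicit. Unset Printing Implicit Defensive.

Lemma cnbhd_preimset (T T' : finType) (e : rel T) (e' : rel T') (f : T' -> T)
    (C : {set T}) (x : T') :
  injective f -> (forall u v, e' u v = e (f u) (f v)) ->
  cnbhd e' x :&: f @^-1: C = f @^-1: (cnbhd e (f x) :&: C).
Proof.
by move=> f_inj fe; apply/setP => y; rewrite !inE fe (inj_eq f_inj).
Qed.

Lemma id_code_preimset (T T' : finType) (e : rel T) (e' : rel T') (f : T' -> T)
    (C : {set T}) :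
  bijective f -> (forall u v, e' u v = e (f u) (f v)) ->
  id_code e C -> id_code e' (f @^-1: C).
Proof.
move=> f_bij fe /andP[/forallP dom /forallP sep]; have [g fK gK] := f_bij.
have f_inj := bij_inj f_bij.
apply/andP; split; apply/forallP => x.
  rewrite (cnbhd_preimset C x f_inj fe); have /set0Pn[y yN] := dom (f x).
  by apply/set0Pn; exists (g y); rewrite inE gK.
apply/forallP => y; apply/implyP => xy.
rewrite (cnbhd_preimset C x f_inj fe) (cnbhd_preimset C y f_inj fe).
apply: contra (implyP (forallP (sep (f x)) (f y)) _) => [/eqP E|].
  by apply/eqP/setP => z; have := congr1 (fun S : {set T'} => g z \in S) E; rewrite !inE gK.
by rewrite (inj_eq f_inj).
Qed.

(* The transpose of a set of cells of the n x m grid, a set of cells of the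
   m x n grid; transposition is an isomorphism from K_m x K_n to K_n x K_m,
   so it lets us derive every "column" statement from its "row" version. *)
Definition swap_cell (n m : nat) (x : 'I_n * 'I_m) : 'I_m * 'I_n := (x.2, x.1).

Lemma swap_cell_bij (n m : nat) : bijective (@swap_cell n m).
Proof. by exists (@swap_cell m n) => -[]. Qed.

Definition transp (n m : nat) (C : {set 'I_n * 'I_m}) : {set 'I_m * 'I_n} :=
  @swap_cell m n @^-1: C.

Lemma mem_transp (n m : nat) (C : {set 'I_n * 'I_m}) (x : 'I_m * 'I_n) :
  (x \in transp C) = ((x.2, x.1) \in C).
Proof. by rewrite inE. Qed.

Lemma transpK (n m : nat) (C : {set 'I_n * 'I_m}) : transp (transp C) = C.
Proof. by apply/setP => -[i j]; rewrite !mem_transp. Qed.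

Lemma id_code_transp (n m : nat) (C : {set 'I_n * 'I_m}) :
  id_code (KnxKm n m) C -> id_code (KnxKm m n) (transp C).
Proof.
apply: id_code_preimset (swap_cell_bij m n) _ => u v.
by rewrite /KnxKm /dprod_rel andbC.
Qed.

Definition rdeg (n m : nat) (C : {set 'I_n * 'I_m}) (i : 'I_n) : nat :=
  #|[set x in C | x.1 == i]|.

Definition cdeg (n m : nat) (C : {set 'I_n * 'I_m}) (j : 'I_m) : nat :=
  rdeg (transp C) j.

Lemma cdeg_transp (n m : nat) (C : {set 'I_n * 'I_m}) : cdeg (transp C) =1 rdeg C.
Proof. by move=> i; rewrite /cdeg transpK. Qed.

Section Degrees.
Variables (n m : nat) (C : {set 'I_n * 'I_m}).

Lemma rdeg_eq0 (i : 'I_n) (x : 'I_n * 'I_m) : rdeg C i = 0 -> x \in C -> x.1 != i.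
Proof.
move=> /cards0_eq row0 xC; apply/negP => /eqP xi.
by move: row0 => /setP/(_ x); rewrite !inE xC xi eqxx.
Qed.

Lemma rdeg_eq1 (x y : 'I_n * 'I_m) :
  rdeg C x.1 = 1 -> x \in C -> y \in C -> y.1 = x.1 -> y = x.
Proof.
move=> row1 xC yC yx; have /card_le1_eqP : rdeg C x.1 <= 1 by rewrite row1.
by apply; rewrite inE ?xC ?yC ?yx eqxx.
Qed.

Lemma sum_rdeg (F : 'I_n -> nat) :
  \sum_i rdeg C i * F i = \sum_(x in C) F x.1.
Proof.
rewrite (partition_big (fun x => x.1) xpredT) //=; apply: eq_bigr => i _.
rewrite /rdeg -sum1_card big_distrl /=.
by apply: eq_big => x; rewrite inE // => /andP[_ /eqP->]; rewrite mul1n.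
Qed.

End Degrees.

Section ColumnDegrees.
Variables (n m : nat) (C : {set 'I_n * 'I_m}).

Lemma cdeg_eq0 (j : 'I_m) (x : 'I_n * 'I_m) : cdeg C j = 0 -> x \in C -> x.2 != j.
Proof.
by case: x => i j' col0 xC; apply: (@rdeg_eq0 _ _ _ _ (j', i) col0); rewrite mem_transp.
Qed.

Lemma cdeg_eq1 (x y : 'I_n * 'I_m) :
  cdeg C x.2 = 1 -> x \in C -> y \in C -> y.2 = x.2 -> y = x.
Proof.
case: x y => [i j] [i' j'] col1 xC yC /= yx.
have := @rdeg_eq1 _ _ _ (j, i) (j', i') col1; rewrite !mem_transp /=.
by move=> /(_ xC yC yx) [-> ->].
Qed.

End ColumnDegrees.

Lemma same_trace_square (n m : nat) (C : {set 'I_n * 'I_m}) (i i' : 'I_n) (j j' : 'I_m) :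
  i != i' -> j != j' ->
  cnbhd (KnxKm n m) (i, j) :&: C = cnbhd (KnxKm n m) (i', j') :&: C <->
  {in C, forall x, (x.1 == i) || (x.1 == i') || (x.2 == j) || (x.2 == j') ->
                   ((x.1 == i) || (x.1 == i')) && ((x.2 == j) || (x.2 == j'))}.
Proof.
move=> /negPf ii' /negPf jj'.
have cellE (x : 'I_n * 'I_m) : (x \in cnbhd (KnxKm n m) (i, j)) ==
    (x \in cnbhd (KnxKm n m) (i', j')) =
    ((x.1 == i) || (x.1 == i') || (x.2 == j) || (x.2 == j') ==>
     ((x.1 == i) || (x.1 == i')) && ((x.2 == j) || (x.2 == j'))).
  case: x => a b; rewrite !inE /KnxKm /dprod_rel /Kn_rel /= !xpair_eqE.
  by move: ii' jj'; rewrite -!val_eqE /=; lia.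
split=> [E x xC | sq].
  by apply/implyP; rewrite -cellE; have /setP/(_ x) := E; rewrite !in_setI xC !andbT => ->.
apply/setP => x; rewrite !in_setI; case: (boolP (x \in C)) => xC; rewrite ?andbF //.
by rewrite !andbT; apply/eqP; rewrite cellE; apply/implyP/sq.
Qed.

Definition nrows (n m : nat) (C : {set 'I_n * 'I_m}) (k : nat) : nat :=
  #|[set i | rdeg C i == k]|.

Definition nrows_big (n m : nat) (C : {set 'I_n * 'I_m}) : nat :=
  #|[set i | 2 < rdeg C i]|.

Definition nalone (n m : nat) (C : {set 'I_n * 'I_m}) (br bc : bool) : nat :=
  #|[set x in C | ((rdeg C x.1 == 1) == br) && ((cdeg C x.2 == 1) == bc)]|.

Section IdentifyingCodeStructure.
Variables (n m : nat) (C : {set 'I_n * 'I_m}).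
Hypothesis C_id : id_code (KnxKm n m) C.

Lemma id_code_separates (x y : 'I_n * 'I_m) :
  x != y -> cnbhd (KnxKm n m) x :&: C != cnbhd (KnxKm n m) y :&: C.
Proof. by move: C_id => /andP[_ /forallP sep] /(implyP (forallP (sep x) y)). Qed.

Lemma no_closed_square (i i' : 'I_n) (j j' : 'I_m) :
  i != i' -> j != j' ->
  ~ {in C, forall x, (x.1 == i) || (x.1 == i') || (x.2 == j) || (x.2 == j') ->
                    ((x.1 == i) || (x.1 == i')) && ((x.2 == j) || (x.2 == j'))}.
Proof.
move=> ii' jj' /(same_trace_square C ii' jj') /eqP.
by apply/negP/id_code_separates; rewrite xpair_eqE negb_and ii'.
Qed.

(* At most one row is free of codewords: two empty rows i, i' would make
   (i,j) and (i',j) indistinguishable. *)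
Lemma empty_rows_le1 : 0 < m -> nrows C 0 <= 1.
Proof.
move=> m_gt0; rewrite leqNgt; apply/negP => /card_gt1P [i [i' [+ + ii']]].
rewrite !inE => /eqP row0 /eqP row0'; set j := Ordinal m_gt0.
have ij_i'j : (i, j) != (i', j) by rewrite xpair_eqE negb_and ii'.
apply: (negP (id_code_separates ij_i'j)); apply/eqP/setP => -[a b]; rewrite !in_setI.
case: (boolP ((a, b) \in C)) => abC; rewrite ?andbF // !andbT.
have := rdeg_eq0 row0 abC; have := rdeg_eq0 row0' abC.
rewrite !inE /KnxKm /dprod_rel /Kn_rel /= !xpair_eqE => /= ai' ai.
by rewrite !(eq_sym _ a) (negPf ai) (negPf ai').
Qed.

(* At most one codeword is alone both in its row and in its column: two such
   codewords x, y span a square absorbing their rows and columns. *)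
Lemma nalone_lonely_le1 : nalone C true true <= 1.
Proof.
rewrite leqNgt; apply/negP => /card_gt1P [x [y [+ + xy]]].
rewrite !inE !eqb_id => /and3P[xC /eqP rx /eqP cx] /and3P[yC /eqP ry /eqP cy].
have x1y1 : x.1 != y.1.
  by apply: contraNneq xy => x1y1; rewrite (rdeg_eq1 rx xC yC (esym x1y1)).
have x2y2 : x.2 != y.2.
  by apply: contraNneq xy => x2y2; rewrite (cdeg_eq1 cx xC yC (esym x2y2)).
apply: (no_closed_square x1y1 x2y2) => z zC.
case/orP => [/orP[/orP[|]|]|] /eqP E.
- by rewrite (rdeg_eq1 rx xC zC E) !eqxx.
- by rewrite (rdeg_eq1 ry yC zC E) !eqxx !orbT.
- by rewrite (cdeg_eq1 cx xC zC E) !eqxx.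
- by rewrite (cdeg_eq1 cy yC zC E) !eqxx !orbT.
Qed.

(* An empty row, an empty column and a codeword alone in its row and column
   cannot coexist: they would span an absorbing square. *)
Lemma no_empty_lines_and_lonely :
  0 < nrows C 0 -> 0 < nrows (transp C) 0 -> 0 < nalone C true true -> False.
Proof.
move=> /card_gt0P [i0 +] /card_gt0P [j0 +] /card_gt0P [x +].
rewrite !inE !eqb_id => /eqP row0 /eqP col0 /and3P[xC /eqP rx /eqP cx].
have i0x : i0 != x.1 by rewrite eq_sym (rdeg_eq0 row0 xC).
have j0x : j0 != x.2 by rewrite eq_sym (cdeg_eq0 col0 xC).
apply: (no_closed_square i0x j0x) => z zC.
case/orP => [/orP[/orP[|]|]|].
- by rewrite (negPf (rdeg_eq0 row0 zC)).
- by move=> /eqP E; rewrite (rdeg_eq1 rx xC zC E) !eqxx !orbT.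
- by rewrite (negPf (cdeg_eq0 col0 zC)).
- by move=> /eqP E; rewrite (cdeg_eq1 cx xC zC E) !eqxx !orbT.
Qed.

(* In the presence of an empty row i0, every row i with exactly two codewords
   x, y contains a codeword that is not alone in its column (otherwise the
   square {i0,i} x {x.2,y.2} would be absorbing).  Such codewords are not
   alone in their row either, whence the bound. *)
Lemma nrows2_le_nalone : 0 < nrows C 0 -> nrows C 2 <= nalone C false false.
Proof.
move=> /card_gt0P [i0]; rewrite inE => /eqP row0.
apply: leq_trans (leq_imset_card (fun x => x.1) _).
apply/subset_leq_card/subsetP => i; rewrite inE => /eqP row2.
have /cards2P [x [y [xy rowE]]] : #|[set z in C | z.1 == i]| == 2 by rewrite -/(rdeg C i) row2.
have inrow z : (z \in C) && (z.1 == i) = (z == x) || (z == y).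
  by have /setP/(_ z) := rowE; rewrite !inE.
have /andP[xC /eqP x1] : (x \in C) && (x.1 == i) by rewrite inrow eqxx.
have /andP[yC /eqP y1] : (y \in C) && (y.1 == i) by rewrite inrow eqxx orbT.
have pick_x z : z \in C -> z.1 = i -> cdeg C z.2 != 1 -> i \in [set x.1 | x in
    [set x in C | ((rdeg C x.1 == 1) == false) && ((cdeg C x.2 == 1) == false)]].
  move=> zC z1 cz; apply/imsetP; exists z; last by rewrite z1.
  by rewrite inE zC z1 row2 (negPf cz).
case: (eqVneq (cdeg C x.2) 1) => [cx|]; last exact: pick_x xC x1.
case: (eqVneq (cdeg C y.2) 1) => [cy|]; last exact: pick_x yC y1.
have i0i : i0 != i by apply/eqP => i0i; move: row0; rewrite i0i row2.
have x2y2 : x.2 != y.2.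
  by apply: contraNneq xy => x2y2; rewrite (cdeg_eq1 cx xC yC (esym x2y2)).
exfalso; apply: (no_closed_square i0i x2y2) => z zC.
case/orP => [/orP[/orP[|]|]|].
- by rewrite (negPf (rdeg_eq0 row0 zC)).
- by move=> zi; have := inrow z; rewrite zC zi => /esym/orP[]/eqP->;
     rewrite ?x1 ?y1 !eqxx ?orbT.
- by move=> /eqP E; rewrite (cdeg_eq1 cx xC zC E) x1 !eqxx !orbT.
- by move=> /eqP E; rewrite (cdeg_eq1 cy yC zC E) y1 !eqxx !orbT.
Qed.

End IdentifyingCodeStructure.

Lemma sum_indicator (T : finType) (A : {pred T}) (P : pred T) :
  \sum_(x in A) (P x : nat) = #|[set x in A | P x]|.
Proof.
rewrite -sum1dep_card big_mkcondr /=.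
by apply: eq_bigr => x _; case: (P x).
Qed.

Lemma sum_indicatorT (T : finType) (P : pred T) :
  \sum_x (P x : nat) = #|[set x | P x]|.
Proof. by rewrite -sum1dep_card [RHS]big_mkcond; apply: eq_bigr => x _; case: (P x). Qed.

Lemma card_ord_range (N lo hi : nat) :
  #|[set i : 'I_N | lo <= i < hi]| = minn N hi - minn N lo.
Proof.
rewrite -sum_indicatorT; elim: N => [|N IH]; first by rewrite big_ord0; lia.
by rewrite big_ord_recr /= IH; lia.
Qed.

Section Counting.
Variables (n m : nat) (C : {set 'I_n * 'I_m}).

Lemma nrows_partition : n = nrows C 0 + nrows C 1 + nrows C 2 + nrows_big C.
Proof.
rewrite /nrows /nrows_big -!sum_indicatorT -!big_split /=.
rewrite -[LHS]card_ord -sum1_card; apply: eq_bigr => i _.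
by case: (rdeg C i) => [|[|[|k]]].
Qed.

Lemma split_by_column (br : bool) :
  #|[set x in C | (rdeg C x.1 == 1) == br]| = nalone C br true + nalone C br false.
Proof.
rewrite /nalone -!sum_indicator -big_split /=; apply: eq_bigr => x _.
by case: (_ == br); case: (cdeg C x.2 == 1).
Qed.

Lemma card_nalone :
  #|C| = nalone C true true + nalone C true false +
         nalone C false true + nalone C false false.
Proof.
rewrite -!addnA addnA -!split_by_column -!sum_indicator -big_split -sum1_card /=.
by apply: eq_bigr => x _; case: (rdeg C x.1 == 1).
Qed.

Lemma codewords_in_rows (P : pred nat) :
  #|[set x in C | P (rdeg C x.1)]| = \sum_i rdeg C i * P (rdeg C i).
Proof. by rewrite -sum_indicator -(sum_rdeg C (fun i => P (rdeg C i) : nat)). Qed.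

Lemma nrows1_nalone : nrows C 1 = nalone C true true + nalone C true false.
Proof.
rewrite -split_by_column (codewords_in_rows (fun k => (k == 1) == true)).
rewrite /nrows -sum_indicatorT; apply: eq_bigr => i _.
by rewrite eqb_id; case: (rdeg C i) => [|[|k]] //=; rewrite muln0.
Qed.

Lemma nrows_heavy :
  2 * nrows C 2 + 3 * nrows_big C <= nalone C false true + nalone C false false.
Proof.
rewrite -split_by_column (codewords_in_rows (fun k => (k == 1) == false)).
rewrite /nrows /nrows_big -!sum_indicatorT !big_distrr -big_split /=.
by apply: leq_sum => i _; case: (rdeg C i) => [|[|[|k]]] //=; rewrite ?muln1.
Qed.

End Counting.

Lemma nalone_transp (n m : nat) (C : {set 'I_n * 'I_m}) (br bc : bool) :
  nalone (transp C) br bc = nalone C bc br.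
Proof.
rewrite /nalone -(on_card_preimset (onW_bij _ (swap_cell_bij m n))).
apply: eq_card => -[j i]; rewrite !inE cdeg_transp /=.
by rewrite -[rdeg (transp C) j]/(cdeg C j) [X in _ && X]andbC.
Qed.

(* The numerical core of the lower bound, in which zr, tr, hr (zc, tc, hc)
   count the rows (columns) carrying 0, 2 and at least 3 codewords, and
   a11, a12, a21, a22 count the codewords alone in their row iff the first
   index is 1 and alone in their column iff the second index is 1.  The
   structural constraints force 2(n + m) <= 3|C| + 2 by linear arithmetic. *)
Lemma counting_bound (n m k zr tr hr zc tc hc a11 a12 a21 a22 : nat) :
  6 <= n -> n <= m -> m <= 2 * n - 1 ->
  n = zr + (a11 + a12) + tr + hr -> m = zc + (a11 + a21) + tc + hc ->
  2 * tr + 3 * hr <= a21 + a22 -> 2 * tc + 3 * hc <= a12 + a22 ->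
  k = a11 + a12 + a21 + a22 ->
  zr <= 1 -> zc <= 1 -> a11 <= 1 -> (0 < zr -> 0 < zc -> 0 < a11 -> False) ->
  (0 < zr -> tr <= a22) -> (0 < zc -> tc <= a22) ->
  2 * (n + m) <= 3 * k + 2.
Proof. lia. Qed.

Lemma id_code_lower_bound (n m : nat) (C : {set 'I_n * 'I_m}) :
  6 <= n -> n <= m -> m <= 2 * n - 1 -> id_code (KnxKm n m) C ->
  2 * (n + m) <= 3 * #|C| + 2.
Proof.
move=> n_ge6 nm m_le C_id; have Ct_id := id_code_transp C_id.
have n_gt0 : 0 < n by apply: leq_trans n_ge6.
have m_gt0 : 0 < m by apply: leq_trans nm.
apply: (@counting_bound n m #|C| (nrows C 0) (nrows C 2) (nrows_big C)
  (nrows (transp C) 0) (nrows (transp C) 2) (nrows_big (transp C))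
  (nalone C true true) (nalone C true false) (nalone C false true)
  (nalone C false false) n_ge6 nm m_le).
- by rewrite {1}(nrows_partition C) nrows1_nalone.
- by rewrite {1}(nrows_partition (transp C)) nrows1_nalone !nalone_transp.
- exact: nrows_heavy.
- by have := nrows_heavy (transp C); rewrite !nalone_transp.
- exact: card_nalone.
- exact: empty_rows_le1.
- exact: empty_rows_le1.
- exact: nalone_lonely_le1.
- exact: no_empty_lines_and_lonely.
- exact: nrows2_le_nalone.
- by move=> /(nrows2_le_nalone Ct_id); rewrite nalone_transp.
Qed.

Definition label_code (n m : nat) (f : 'I_n -> nat) (g : 'I_m -> nat) :
  {set 'I_n * 'I_m} := [set x | f x.1 == g x.2].

Section LabelCodes.
Variables (n m : nat) (f : 'I_n -> nat) (g : 'I_m -> nat).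
Local Notation C := (label_code f g).

Hypothesis row_labels : forall r, exists c, f r = g c.
Hypothesis col_labels : forall c, exists r, f r = g c.
Hypothesis no_double_label : forall r r' c c', r != r' -> c != c' ->
  f r = f r' -> g c = g c' -> f r <> g c.
Hypothesis third_line : forall r r' c c', r != r' -> c != c' ->
  f r = g c -> f r' = g c' -> f r != f r' ->
  (exists r'', [/\ r'' != r, r'' != r' & (f r'' = f r \/ f r'' = f r')]) \/
  (exists c'', [/\ c'' != c, c'' != c' & (g c'' = f r \/ g c'' = f r')]).
Hypothesis spare_label : forall r c, exists r' c',
  [/\ f r' = g c', f r' != f r & f r' != g c].

Lemma mem_label_code (x : 'I_n * 'I_m) : (x \in C) = (f x.1 == g x.2).
Proof. by rewrite inE. Qed.

Lemma label_code_dominating : dominating (KnxKm n m) C.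
Proof.
apply/forallP => -[i j]; have [r' [c' [lab' ri cj]]] := spare_label i j.
apply/set0Pn; exists (r', c'); rewrite !inE /KnxKm /dprod_rel /Kn_rel /=.
rewrite lab' eqxx andbT; apply/orP; right; apply/andP; split.
  by apply: contraNneq ri => <-.
by apply: contraNneq cj => ->; rewrite lab'.
Qed.

Lemma label_code_sep_row (i : 'I_n) (j j' : 'I_m) : j != j' ->
  cnbhd (KnxKm n m) (i, j) :&: C != cnbhd (KnxKm n m) (i, j') :&: C.
Proof.
move=> jj'; apply/negP => /eqP /setP E; have [r lab] := col_labels j.
have := E (r, j); rewrite !in_setI mem_label_code lab eqxx !andbT !inE.
rewrite /KnxKm /dprod_rel /Kn_rel /= !xpair_eqE.
by move: jj'; rewrite -!val_eqE /=; lia.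
Qed.

Lemma label_code_sep_col (i i' : 'I_n) (j : 'I_m) : i != i' ->
  cnbhd (KnxKm n m) (i, j) :&: C != cnbhd (KnxKm n m) (i', j) :&: C.
Proof.
move=> ii'; apply/negP => /eqP /setP E; have [c lab] := row_labels i.
have := E (i, c); rewrite !in_setI mem_label_code lab eqxx !andbT !inE.
rewrite /KnxKm /dprod_rel /Kn_rel /= !xpair_eqE.
by move: ii'; rewrite -!val_eqE /=; lia.
Qed.

(* Cells in distinct rows and columns: if their traces agreed, the square
   {i,i'} x {j,j'} would absorb the codewords of its lines (same_trace_square).
   The labels of rows i, i' then both equal those of columns j, j', which
   contradicts no_double_label if f i = f i', and third_line otherwise. *)
Lemma label_code_sep_square (i i' : 'I_n) (j j' : 'I_m) : i != i' -> j != j' ->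
  cnbhd (KnxKm n m) (i, j) :&: C != cnbhd (KnxKm n m) (i', j') :&: C.
Proof.
move=> ii' jj'; apply/negP => /eqP /(same_trace_square C ii' jj') sq.
have in_sq r c : f r = g c -> (r == i) || (r == i') || (c == j) || (c == j') ->
    ((r == i) || (r == i')) && ((c == j) || (c == j')).
  by move=> lab; apply: (sq (r, c)); rewrite mem_label_code lab.
have row_sq r c : f r = g c -> (r == i) || (r == i') -> (c == j) || (c == j').
  by move=> lab ri; have := in_sq r c lab; rewrite ri => /(_ isT) /andP[].
have col_sq r c : f r = g c -> (c == j) || (c == j') -> (r == i) || (r == i').
  by move=> lab cj; have := in_sq r c lab; rewrite -orbA cj orbT => /(_ isT) /andP[].
have [ci labi] := row_labels i; have [ci' labi'] := row_labels i'.
have ci_sq : (ci == j) || (ci == j') by rewrite (row_sq i) ?eqxx.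
have ci'_sq : (ci' == j) || (ci' == j') by rewrite (row_sq i') ?eqxx ?orbT.
have [fii'|fii'] := eqVneq (f i) (f i').
  have [rj labj] := col_labels j; have [rj' labj'] := col_labels j'.
  have label_i r : (r == i) || (r == i') -> f r = f i.
    by case/orP => /eqP->.
  have gj : g j = f i by rewrite -labj label_i // (col_sq _ _ labj) ?eqxx.
  have gj' : g j' = f i by rewrite -labj' label_i // (col_sq _ _ labj') ?eqxx ?orbT.
  exact: (no_double_label ii' jj' fii' (etrans gj (esym gj')) (esym gj)).
have cici' : ci != ci' by apply: contraNneq fii' => cc; rewrite labi labi' cc.
case: (third_line ii' cici' labi labi' fii') => [[r [ri ri' lab]] | [c [cci cci' lab]]].
- have [c [labc c_sq]] : exists c, f r = g c /\ (c == j) || (c == j').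
    by case: lab => ->; [exists ci | exists ci'].
  by move: (col_sq r c labc c_sq); rewrite (negPf ri) (negPf ri').
- have : (c == j) || (c == j').
    by case: lab => /esym lab; [apply: (row_sq i) | apply: (row_sq i')];
       rewrite ?eqxx ?orbT.
  move: cci cci' ci_sq ci'_sq cici' jj'; rewrite -!val_eqE /=; lia.
Qed.

Lemma label_code_id : id_code (KnxKm n m) C.
Proof.
rewrite /id_code label_code_dominating; apply/forallP => -[i j].
apply/forallP => -[i' j']; apply/implyP; rewrite xpair_eqE negb_and.
have [<-|ii'] := eqVneq i i'; first exact: label_code_sep_row.
have [<-|jj' _] := eqVneq j j'; first by move=> _; exact: label_code_sep_col.
exact: label_code_sep_square.
Qed.

End LabelCodes.

(* The labelling used for the upper bound, for n = a + 2b + e and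
   m = 2a + b + e with labels 0 .. a+b+e-1: rows 0 .. a+b-1 carry their own
   index and the remaining rows their index minus b, so labels a .. a+b-1
   sit on two rows; columns 0 .. a-1 carry their index and the others their
   index minus a, so labels 0 .. a-1 sit on two columns. *)
Definition row_label (a b r : nat) : nat := if r < a + b then r else r - b.
Definition col_label (a c : nat) : nat := if c < a then c else c - a.

Ltac case_labels := rewrite /row_label /col_label; repeat case: ifP => ?.

Section Construction.
Variables (n m a b e : nat).
Hypotheses (n_eq : n = a + 2 * b + e) (m_eq : m = 2 * a + b + e).
Hypotheses (e_le1 : e <= 1) (ab_ge3 : 3 <= a + b).
Let f (r : 'I_n) := row_label a b r.
Let g (c : 'I_m) := col_label a c.

Lemma row_label_lt (r : 'I_n) : f r < a + b + e.
Proof. by have rn := ltn_ord r; rewrite /f; case_labels; lia. Qed.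

Lemma col_label_lt (c : 'I_m) : g c < a + b + e.
Proof. by have cm := ltn_ord c; rewrite /g; case_labels; lia. Qed.

Lemma row_of_label l : l < a + b + e -> exists r : 'I_n, f r = l.
Proof.
move=> lL; have lt_n : (if l < a + b then l else l + b) < n by case_labels; lia.
exists (Ordinal lt_n); rewrite /f /=.
by case: (ltnP l (a + b)) => lab /=; case_labels; lia.
Qed.

Lemma col_of_label l : l < a + b + e -> exists c : 'I_m, g c = l.
Proof.
move=> lL; have lt_m : (if l < a then l else l + a) < m by case_labels; lia.
exists (Ordinal lt_m); rewrite /g /=.
by case: (ltnP l a) => lab /=; case_labels; lia.
Qed.

Lemma other_row_of_label l (r0 : 'I_n) : a <= l < a + b ->
  exists2 r : 'I_n, r != r0 & f r = l.
Proof.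
move=> lab; have lt_n : (if r0 == l :> nat then l + b else l) < n by case_labels; lia.
exists (Ordinal lt_n); rewrite /f -?(inj_eq (@ord_inj n)) /=;
  by case: (eqVneq (r0 : nat) l) => r0l /=; case_labels; lia.
Qed.

Lemma other_col_of_label l (c0 : 'I_m) : l < a -> exists2 c : 'I_m, c != c0 & g c = l.
Proof.
move=> lab; have lt_m : (if c0 == l :> nat then l + a else l) < m by case_labels; lia.
exists (Ordinal lt_m); rewrite /g -?(inj_eq (@ord_inj m)) /=;
  by case: (eqVneq (c0 : nat) l) => c0l /=; case_labels; lia.
Qed.

Lemma label_two_rows (r r' : 'I_n) : r != r' -> f r = f r' -> a <= f r.
Proof.
rewrite -(inj_eq (@ord_inj n)) /f => rr'; have := ltn_ord r; have := ltn_ord r'.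
by move: rr'; case_labels; lia.
Qed.

Lemma label_two_cols (c c' : 'I_m) : c != c' -> g c = g c' -> g c < a.
Proof.
rewrite -(inj_eq (@ord_inj m)) /g => cc'; have := ltn_ord c; have := ltn_ord c'.
by move: cc'; case_labels; lia.
Qed.

Lemma label_second_line l (r0 : 'I_n) (c0 : 'I_m) : l < a + b ->
  (exists2 r : 'I_n, r != r0 & f r = l) \/ (exists2 c : 'I_m, c != c0 & g c = l).
Proof.
case: (ltnP l a) => [la _ | al lab]; first by right; apply: other_col_of_label.
by left; apply: other_row_of_label; rewrite al.
Qed.

Lemma construction_id : id_code (KnxKm n m) (label_code f g).
Proof.
apply: label_code_id.
- by move=> r; have [c <-] := col_of_label (row_label_lt r); exists c.
- by move=> c; have [r <-] := row_of_label (col_label_lt c); exists r.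
- move=> r r' c c' rr' cc' frr' gcc' frgc.
  by move: (label_two_rows rr' frr') (label_two_cols cc' gcc'); rewrite frgc; lia.
- move=> r r' c c' _ _ frgc fr'gc' frr'.
  have [lr|] := ltnP (f r) (a + b).
    case: (label_second_line r c lr) => [[r'' r''r lab] | [c'' c''c lab]].
      left; exists r''; split=> //; last by left.
      by apply: contraNneq frr' => <-; rewrite lab.
    right; exists c''; split=> //; last by left.
    by apply: contraNneq frr' => c''c'; rewrite -lab c''c' -fr'gc'.
  have [lr' _|] := ltnP (f r') (a + b).
    case: (label_second_line r' c' lr') => [[r'' r''r lab] | [c'' c''c lab]].
      left; exists r''; split=> //; last by right.
      by apply: contraNneq frr' => <-; rewrite lab.
    right; exists c''; split=> //; last by right.
    by apply: contraNneq frr' => c''_c; rewrite frgc -c''_c lab.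
  by have := row_label_lt r; have := row_label_lt r'; move: frr'; lia.
- move=> r c.
  have [l [l3 lr lc]] : exists l, [/\ l < 3, l != f r & l != g c].
    case: (f r) (g c) => [|[|?]] [|[|?]]; by [exists 2 | exists 1 | exists 0].
  have lL : l < a + b + e by lia.
  have [r' fr'] := row_of_label lL; have [c' gc'] := col_of_label lL.
  by exists r', c'; rewrite fr' gc'.
Qed.

Lemma row_label_inj_off_band (r r' : 'I_n) :
  ~~ (a + b <= r < a + 2 * b) -> ~~ (a + b <= r' < a + 2 * b) -> f r = f r' -> r = r'.
Proof.
rewrite /f => rB r'B frr'; apply: ord_inj; have := ltn_ord r; have := ltn_ord r'.
by move: rB r'B frr'; case_labels; lia.
Qed.

(* Rows of the band carry labels at least a, which sit on a single column. *)
Lemma row_label_band (r : 'I_n) : a + b <= r < a + 2 * b -> a <= f r.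
Proof. by rewrite /f; case_labels; lia. Qed.

(* The code has at most m + b codewords: at most one per column outside the
   band, and at most one per row of the band. *)
Lemma construction_card : #|label_code f g| <= m + b.
Proof.
set B := [set x : 'I_n * 'I_m | a + b <= x.1 < a + 2 * b].
rewrite -(cardsID B (label_code f g)) addnC leq_add //.
  rewrite -[X in _ <= X]card_ord; apply: (leq_card_in snd) => x y.
  rewrite !inE => /andP[xB /eqP lx] /andP[yB /eqP ly] xy.
  rewrite [x]surjective_pairing [y]surjective_pairing -xy; congr pair.
  by apply: row_label_inj_off_band xB yB _; rewrite lx ly xy.
have -> : b = #|[set r : 'I_n | a + b <= r < a + 2 * b]| by rewrite card_ord_range; lia.
rewrite -(card_in_imset (f := fst)); last first.
  move=> x y; rewrite !inE => /andP[/eqP lx _] /andP[/eqP ly yB] xy.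
  rewrite [x]surjective_pairing [y]surjective_pairing -xy; congr pair.
  apply/eqP; apply: contraT => neq; have := label_two_cols neq.
  by rewrite -lx -ly xy ltnNge (row_label_band yB) => /(_ erefl).
by apply/subset_leq_card/subsetP => _ /imsetP[x + ->]; rewrite !inE => /andP[].
Qed.

End Construction.

Lemma dimension_split (n m : nat) :
  6 <= n -> n <= m -> m <= 2 * n - 1 -> (n + m) %% 3 = 0 \/ (n + m) %% 3 = 2 ->
  exists a b e, [/\ n = a + 2 * b + e, m = 2 * a + b + e, e <= 1, 3 <= a + b &
                    (2 * m + 2 * n) %/ 3 = m + b].
Proof.
move=> n_ge6 nm m_le [] nm3.
  by exists ((2 * m - n) %/ 3), ((2 * n - m) %/ 3), 0; split; lia.
by exists ((2 * m - n - 1) %/ 3), ((2 * n - m - 1) %/ 3), 1; split; lia.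
Qed.

Lemma floor_le_of_bound (n m s : nat) :
  (n + m) %% 3 = 0 \/ (n + m) %% 3 = 2 -> 2 * (n + m) <= 3 * s + 2 ->
  (2 * m + 2 * n) %/ 3 <= s.
Proof. lia. Qed.

Theorem theorem3 (n m : nat) :
  6 <= n -> n <= m -> m <= 2 * n - 1 ->
  ((n + m) %% 3 = 0 \/ (n + m) %% 3 = 2) ->
  gammaID_is (KnxKm n m) ((2 * m + 2 * n) %/ 3).
Proof.
move=> n_ge6 nm m_le nm3.
have lower C : id_code (KnxKm n m) C -> (2 * m + 2 * n) %/ 3 <= #|C|.
  by move=> C_id; apply/floor_le_of_bound/id_code_lower_bound.
split; last exact: lower.
have [a [b [e [n_eq m_eq e_le1 ab_ge3 k_eq]]]] := dimension_split n_ge6 nm m_le nm3.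
have C_id := construction_id n_eq m_eq e_le1 ab_ge3.
exists (label_code (fun r : 'I_n => row_label a b r) (fun c : 'I_m => col_label a c)).
split=> //; apply/eqP; rewrite eqn_leq lower // andbT k_eq.
exact: construction_card n_eq m_eq e_le1 ab_ge3.
Qed.
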